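(* For every $\forall^+$ type $P$, $I\ \llbracket P\cdot P\to P\rrbracket_e\ I$; equivalently, whenever $x\,\llbracket P\rrbracket_e\,y$ and $y\,\llbracket P\rrbracket_e\,z$, also $x\,\llbracket P\rrbracket_e\,z$.
   Context: Terms are those of the pure untyped $\lambda$-calculus, up to $\alpha$-equivalence; $=_{\beta\eta}$ is $\beta\eta$-convertibility; $I:=\lambda x.x$. Relational types: $R ::= X \mid R\to R' \mid \forall X.R \mid R^{\cup} \mid R\cdot R' \mid t$ (last form: promotion of a term). A relation on terms is $\beta\eta$-closed if closed under replacing either related term by a $\beta\eta$-equal one; $\mathcal{R}$ is the set of such relations; environments map type variables to $\mathcal{R}$. Interpretation: $\llbracket X\rrbracket_\gamma=\gamma(X)$; $t\,\llbracket R\to R'\rrbracket_\gamma\,t'$ iff for all $a,a'$ with $a\,\llbracket R\rrbracket_\gamma\,a'$, $t\,a\,\llbracket R'\rrbracket_\gamma\,t'\,a'$; $\llbracket \forall X.R\rrbracket_\gamma=\bigcap_{r\in\mathcal{R}}\llbracket R\rrbracket_{\gamma[X\mapsto r]}$; $t\,\llbracket R^\cup\rrbracket_\gamma\,t'$ iff $t'\,\llbracket R\rrbracket_\gamma\,t$; $t\,\llbracket R\cdot R'\rrbracket_\gamma\,t'$ iff $\exists t''$, $t\,\llbracket R\rrbracket_\gamma\,t''$ and $t''\,\llbracket R'\rrbracket_\gamma\,t'$; $\llbracket \hat t\rrbracket_\gamma=\{(t,t')\mid \hat t\,t=_{\beta\eta}t'\}$. $e$ is the environment mapping every type variable to $=_{\beta\eta}$.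 Polarities $p\in\{+,-\}$, $\bar p$ the other; the property $\forall^p$: type variables are $\forall^p$; if $R$ is $\forall^{\bar p}$ and $R'$ is $\forall^p$ then $R\to R'$ is $\forall^p$; if $R$ is $\forall^+$ then $\forall X.R$ is $\forall^+$; if $R$ is $\forall^p$ then so is $R^\cup$; a promotion of $t$ with $t=_{\beta\eta}I$ is $\forall^p$. *)

(* Untyped lambda-calculus (de Bruijn indices, so terms are
   automatically up to alpha-equivalence), beta-eta convertibility, relational
   types and their interpretation. *)
From Stdlib Require Import Relations Arith.

Inductive term : Type :=
| Var : nat -> term
| App : term -> term -> term
| Lam : term -> term.

Fixpoint lift (c : nat) (t : term) : term :=
  match t with
  | Var n => if Nat.leb c n then Var (S n) else Var n
  | App a b => App (lift c a) (lift c b)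
  | Lam a => Lam (lift (S c) a)
  end.

Fixpoint subst (k : nat) (u : term) (t : term) : term :=
  match t with
  | Var n => if Nat.eqb n k then u
             else if Nat.ltb k n then Var (pred n) else Var n
  | App a b => App (subst k u a) (subst k u b)
  | Lam a => Lam (subst (S k) (lift 0 u) a)
  end.

Inductive step : term -> term -> Prop :=
| step_beta : forall t u, step (App (Lam t) u) (subst 0 u t)
| step_eta : forall t, step (Lam (App (lift 0 t) (Var 0))) t
| step_appl : forall a a' b, step a a' -> step (App a b) (App a' b)
| step_appr : forall a b b', step b b' -> step (App a b) (App a b')
| step_lam : forall a a', step a a' -> step (Lam a) (Lam a').

Definition beq : term -> term -> Prop := clos_refl_sym_trans term step.

Definition I : term := Lam (Var 0).

Inductive rtype : Type :=
| RVar : nat -> rtype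
| RArrow : rtype -> rtype -> rtype
| RForall : nat -> rtype -> rtype
| RConv : rtype -> rtype
| RComp : rtype -> rtype -> rtype
| RProm : term -> rtype.

Definition rel := term -> term -> Prop.

Definition betaeta_closed (r : rel) : Prop :=
  forall t1 t1' t2 t2', beq t1 t1' -> beq t2 t2' -> r t1 t2 -> r t1' t2'.

Definition env := nat -> rel.

Definition env_upd (g : env) (X : nat) (r : rel) : env :=
  fun Y => if Nat.eqb Y X then r else g Y.

Fixpoint interp (R : rtype) (g : env) : rel :=
  match R with
  | RVar X => g X
  | RArrow R1 R2 => fun t t' =>
      forall a a', interp R1 g a a' -> interp R2 g (App t a) (App t' a')
  | RForall X R1 => fun t t' =>
      forall r : rel, betaeta_closed r -> interp R1 (env_upd g X r) t t'
  | RConv R1 => fun t t' => interp R1 g t' t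
  | RComp R1 R2 => fun t t' =>
      exists t'', interp R1 g t t'' /\ interp R2 g t'' t'
  | RProm s => fun t t' => beq (App s t) t'
  end.

Definition e : env := fun _ => beq.

(** Polarities: [true] = +, [false] = -.  [forallp p R] is the property
    "R is forall^p". *)
Inductive forallp : bool -> rtype -> Prop :=
| fp_var : forall p X, forallp p (RVar X)
| fp_arrow : forall p R R', forallp (negb p) R -> forallp p R' ->
    forallp p (RArrow R R')
| fp_forall : forall X R, forallp true R -> forallp true (RForall X R)
| fp_conv : forall p R, forallp p R -> forallp p (RConv R)
| fp_prom : forall p t, beq t I -> forallp p (RProm t).

(* Instantiating every quantified variable by =βη shows, by induction on the
   ∀^p derivation, that [[P]]_e is contained in =βη when P is ∀^+ and
   contains =βη when P is ∀^-; the positive arrow case needs the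
   extensionality of =βη, which comes from the η-rule.  Since [[P]]_e is
   βη-closed, x [[P]] y [[P]] z gives x =βη y and hence x [[P]] z, and the
   claim about I follows because I a =βη a. *)
From Stdlib Require Import Relations Arith Lia Setoid Morphisms.

Ltac nat_cases :=
  repeat match goal with
  | |- context [Nat.leb ?a ?b] => destruct (Nat.leb_spec a b)
  | |- context [Nat.eqb ?a ?b] => destruct (Nat.eqb_spec a b)
  | |- context [Nat.ltb ?a ?b] => destruct (Nat.ltb_spec a b)
  end.

Lemma lift_lift t c d : d <= c -> lift (S c) (lift d t) = lift d (lift c t).
Proof.
  revert c d; induction t; intros c d Hd; cbn [lift].
  - nat_cases; cbn [lift]; nat_cases; try lia; reflexivity.
  - rewrite IHt1, IHt2 by lia; reflexivity.
  - rewrite IHt by lia; reflexivity.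
Qed.

Lemma lift_subst t c k u : k <= c ->
  lift c (subst k u t) = subst k (lift c u) (lift (S c) t).
Proof.
  revert c k u; induction t; intros c k u Hk; cbn [lift subst].
  - nat_cases; cbn [lift subst]; nat_cases; cbn [lift subst]; nat_cases;
      try lia; try reflexivity; f_equal; lia.
  - rewrite IHt1, IHt2 by lia; reflexivity.
  - rewrite IHt, lift_lift by lia; reflexivity.
Qed.

Lemma subst_lift t k u : subst k u (lift k t) = t.
Proof.
  revert k u; induction t; intros k u; cbn [lift subst].
  - nat_cases; cbn [subst]; nat_cases; try lia; reflexivity.
  - rewrite IHt1, IHt2; reflexivity.
  - rewrite IHt; reflexivity.
Qed.

Lemma subst_lift_comm t c j w : c <= j ->
  subst (S j) (lift c w) (lift c t) = lift c (subst j w t).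
Proof.
  revert c j w; induction t; intros c j w Hc; cbn [lift subst].
  - nat_cases; cbn [lift subst]; nat_cases; cbn [lift subst]; nat_cases;
      try lia; try reflexivity; f_equal; lia.
  - rewrite IHt1, IHt2 by lia; reflexivity.
  - rewrite <- lift_lift, IHt by lia; reflexivity.
Qed.

Lemma subst_subst t k j u w : k <= j ->
  subst j w (subst k u t) = subst k (subst j w u) (subst (S j) (lift k w) t).
Proof.
  revert k j u w; induction t; intros k j u w Hk; cbn [lift subst].
  - nat_cases; cbn [subst]; nat_cases; cbn [subst]; nat_cases;
      try lia; try reflexivity; try (symmetry; apply subst_lift); f_equal; lia.
  - rewrite IHt1, IHt2 by lia; reflexivity.
  - rewrite IHt, subst_lift_comm, lift_lift by lia; reflexivity.
Qed.

Lemma step_lift u v c : step u v -> step (lift c u) (lift c v).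
Proof.
  intros Huv; revert c; induction Huv; intros c; cbn [lift].
  - rewrite lift_subst by lia; constructor.
  - rewrite lift_lift by lia; constructor.
  - constructor; auto.
  - constructor; auto.
  - constructor; auto.
Qed.

Lemma step_subst u v j w : step u v -> step (subst j w u) (subst j w v).
Proof.
  intros Huv; revert j w; induction Huv; intros j w; cbn [subst].
  - rewrite (subst_subst t 0 j) by lia; constructor.
  - rewrite subst_lift_comm by lia; constructor.
  - constructor; auto.
  - constructor; auto.
  - constructor; auto.
Qed.

#[export] Instance beq_equivalence : Equivalence beq.
Proof.
  split.
  - intro; apply rst_refl.
  - intros x y; apply rst_sym.
  - intros x y z; apply rst_trans.
Qed.

Lemma beq_map (f : term -> term) :
  (forall x y, step x y -> step (f x) (f y)) -> Proper (beq ==> beq) f.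
Proof.
  intros Hf x y Hxy; induction Hxy.
  - apply rst_step; auto.
  - reflexivity.
  - symmetry; assumption.
  - etransitivity; eassumption.
Qed.

#[export] Instance App_proper : Proper (beq ==> beq ==> beq) App.
Proof.
  intros a a' Ha b b' Hb; transitivity (App a' b).
  - apply (beq_map (fun x => App x b)); [constructor; auto | exact Ha].
  - apply (beq_map (App a')); [constructor; auto | exact Hb].
Qed.

#[export] Instance Lam_proper : Proper (beq ==> beq) Lam.
Proof. apply beq_map; constructor; auto. Qed.

Lemma beq_I t : beq (App I t) t.
Proof. apply rst_step, (step_beta (Var 0)). Qed.

Fixpoint fv_below (k : nat) (t : term) : Prop :=
  match t with
  | Var n => n < k
  | App a b => fv_below k a /\ fv_below k b
  | Lam a => fv_below (S k) a
  end.

Lemma fv_below_mono t k k' : k <= k' -> fv_below k t -> fv_below k' t.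
Proof.
  revert k k'; induction t; cbn; intros k k' Hk H.
  - lia.
  - destruct H; split; eauto.
  - apply (IHt (S k)); auto; lia.
Qed.

Lemma fv_below_exists t : exists k, fv_below k t.
Proof.
  induction t as [n | a [ka Ha] b [kb Hb] | a [k Ha]]; cbn.
  - exists (S n); lia.
  - exists (ka + kb); split; [apply (fv_below_mono _ ka) | apply (fv_below_mono _ kb)];
      auto; lia.
  - exists k; apply (fv_below_mono _ k); auto.
Qed.

Lemma fv_below_lift t k c : fv_below k t -> fv_below (S k) (lift c t).
Proof.
  revert k c; induction t; cbn [lift fv_below]; intros k c H.
  - nat_cases; cbn; lia.
  - destruct H; split; auto.
  - auto.
Qed.

Lemma subst_fv_below t k u : fv_below k t -> subst k u t = t.
Proof.
  revert k u; induction t; cbn [subst fv_below]; intros k u H.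
  - nat_cases; try lia; reflexivity.
  - destruct H; rewrite IHt1, IHt2; auto.
  - rewrite IHt; auto.
Qed.

(* Only the fresh variable a := Var k is used: lifting and then substituting
   Var 0 for Var (S k) turns t (Var k) into the η-redex body lift 0 t (Var 0). *)
Lemma beq_ext t t' : (forall a, beq (App t a) (App t' a)) -> beq t t'.
Proof.
  intros H.
  destruct (fv_below_exists t) as [k1 H1], (fv_below_exists t') as [k2 H2].
  assert (F1 : fv_below (k1 + k2) t) by (apply (fv_below_mono _ k1); auto; lia).
  assert (F2 : fv_below (k1 + k2) t') by (apply (fv_below_mono _ k2); auto; lia).
  assert (Hk : beq (App (lift 0 t) (Var 0)) (App (lift 0 t') (Var 0))).
  { pose proof (H (Var (k1 + k2))) as Hv.
    apply (beq_map (lift 0)) in Hv; [| intros; apply step_lift; auto].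
    apply (beq_map (subst (S (k1 + k2)) (Var 0))) in Hv;
      [| intros; apply step_subst; auto].
    cbn [lift subst Nat.leb Nat.eqb] in Hv; rewrite Nat.eqb_refl in Hv.
    rewrite !subst_fv_below in Hv by (apply fv_below_lift; auto).
    exact Hv. }
  rewrite <- (rst_step _ _ _ _ (step_eta t)), <- (rst_step _ _ _ _ (step_eta t')).
  now rewrite Hk.
Qed.

Lemma interp_closed R g : (forall X, betaeta_closed (g X)) ->
  betaeta_closed (interp R g).
Proof.
  revert g; induction R; intros g Hg t1 t1' t2 t2' E1 E2 H; cbn in *.
  - eapply Hg; eauto.
  - intros a a' Ha; apply (IHR2 g Hg (App t1 a) _ (App t2 a'));
      [now rewrite E1 | now rewrite E2 | apply H, Ha].
  - intros r Hr; eapply IHR; [| eauto | eauto | auto].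
    intros Y; unfold env_upd; destruct (Nat.eqb Y n); auto.
  - eapply IHR; eauto.
  - destruct H as [t'' [Ha Hb]]; exists t''; split.
    + eapply IHR1; [auto | eauto | reflexivity | auto].
    + eapply IHR2; [auto | reflexivity | eauto | auto].
  - now rewrite <- E1, <- E2.
Qed.

Lemma beq_closed : betaeta_closed beq.
Proof. intros t1 t1' t2 t2' E1 E2 H; now rewrite <- E1, <- E2. Qed.

Definition beq_env (g : env) : Prop := forall X t t', g X t t' <-> beq t t'.

Definition polar_bound (p : bool) (r : rel) : Prop :=
  if p then inclusion term r beq else inclusion term beq r.

Lemma forallp_interp_bound p R : forallp p R ->
  forall g, beq_env g -> polar_bound p (interp R g).
Proof.
  induction 1 as [p X | p R R' _ IHR _ IHR' | X R _ IHR | p R _ IHR | p s Hs];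
    intros g Hg; cbn.
  - destruct p; intros t t'; apply Hg.
  - specialize (IHR g Hg); specialize (IHR' g Hg).
    destruct p; cbn in *; intros t t' H.
    + apply beq_ext; intros a; apply IHR', H, IHR; reflexivity.
    + intros a a' Ha; apply IHR'; now rewrite H, (IHR _ _ Ha).
  - intros t t' H; apply (IHR (env_upd g X beq)); [| apply H, beq_closed].
    intros Y u u'; unfold env_upd; destruct (Nat.eqb Y X); [tauto | apply Hg].
  - specialize (IHR g Hg); destruct p; intros t t' H.
    + symmetry; apply IHR, H.
    + apply IHR; symmetry; exact H.
  - assert (Hsu : forall u, beq (App s u) u) by (intros u; now rewrite Hs, beq_I).
    destruct p; intros t t' H; rewrite <- H, Hsu; reflexivity.
Qed.

Theorem mainTheorem11 :
  forall P : rtype, forallp true P ->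
    interp (RArrow (RComp P P) P) e I I /\
    (forall x y z : term, interp P e x y -> interp P e y z -> interp P e x z).
Proof.
  intros P HP.
  assert (Hsub : inclusion term (interp P e) beq)
    by (apply (forallp_interp_bound true P HP); intros X t t'; reflexivity).
  assert (Htrans : forall x y z, interp P e x y -> interp P e y z -> interp P e x z).
  { intros x y z Hxy Hyz.
    apply (interp_closed P e (fun _ => beq_closed) y x z z); [symmetry; auto | reflexivity | exact Hyz]. }
  split; [| exact Htrans].
  intros a a' [a'' [Ha Ha']].
  apply (interp_closed P e (fun _ => beq_closed) a _ a'); [symmetry; apply beq_I .. | eauto].
Qed.
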